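(* Let $\mathcal{X}$ be a separable infinite-dimensional complex Banach space, $T\in\mathcal{B}(\mathcal{X})$, and $\mathcal{M}$ a nontrivial closed subspace of $\mathcal{X}$. If $T$ is $\mathcal{M}$-disk transitive, then $T$ is $\mathcal{M}$-diskcyclic.
   Context: $\mathbb{N}=\{0,1,2,\dots\}$, $\mathbb{D}=\{\alpha\in\mathbb{C}:|\alpha|\le1\}$. $T$ is $\mathcal{M}$-disk transitive if for any two nonempty relatively open sets $U,V$ in $\mathcal{M}$ there exist $n\in\mathbb{N}$ and $\alpha\in\mathbb{C}$ with $|\alpha|\ge1$ such that $T^{-n}(\alpha U)\cap V$ (with $T^{-n}(A)=\{x:T^nx\in A\}$) contains a nonempty relatively open subset of $\mathcal{M}$. $T$ is $\mathcal{M}$-diskcyclic if there is $x\in\mathcal{X}$ with $\{\alpha T^nx:\alpha\in\mathbb{D},n\in\mathbb{N}\}\cap\mathcal{M}$ dense in $\mathcal{M}$. *)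

From Stdlib Require Import Reals.
Open Scope R_scope.

Definition C : Type := (R * R)%type.
Definition C0 : C := (0, 0).
Definition C1 : C := (1, 0).
Definition Cadd (a b : C) : C := (fst a + fst b, snd a + snd b).
Definition Cmul (a b : C) : C :=
  (fst a * fst b - snd a * snd b, fst a * snd b + snd a * fst b).
Definition Cmod (a : C) : R := sqrt (fst a * fst a + snd a * snd a).

Record CBanach : Type := {
  car :> Type;
  vadd : car -> car -> car;
  vzero : car;
  vopp : car -> car;
  vscal : C -> car -> car;
  vnorm : car -> R;
  vadd_assoc : forall x y z, vadd x (vadd y z) = vadd (vadd x y) z;
  vadd_comm : forall x y, vadd x y = vadd y x;
  vadd_0 : forall x, vadd x vzero = x;
  vadd_opp : forall x, vadd x (vopp x) = vzero;
  vscal_assoc : forall a b x, vscal a (vscal b x) = vscal (Cmul a b) x;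
  vscal_1 : forall x, vscal C1 x = x;
  vscal_distr_l : forall a b x, vscal (Cadd a b) x = vadd (vscal a x) (vscal b x);
  vscal_distr_r : forall a x y, vscal a (vadd x y) = vadd (vscal a x) (vscal a y);
  vnorm_nonneg : forall x, 0 <= vnorm x;
  vnorm_eq0 : forall x, vnorm x = 0 -> x = vzero;
  vnorm_triangle : forall x y, vnorm (vadd x y) <= vnorm x + vnorm y;
  vnorm_scal : forall a x, vnorm (vscal a x) = Cmod a * vnorm x;
  vcomplete : forall u : nat -> car,
      (forall eps, 0 < eps -> exists N, forall m n, (N <= m)%nat -> (N <= n)%nat ->
          vnorm (vadd (u m) (vopp (u n))) < eps) ->
      exists l, forall eps, 0 < eps -> exists N, forall n, (N <= n)%nat ->
          vnorm (vadd (u n) (vopp l)) < eps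
}.

Arguments vadd {_}. Arguments vzero {_}. Arguments vopp {_}.
Arguments vscal {_}. Arguments vnorm {_}.

Definition vdist {X : CBanach} (x y : X) : R := vnorm (vadd x (vopp y)).

Fixpoint lincomb {X : CBanach} (n : nat) (c : nat -> C) (v : nat -> X) : X :=
  match n with
  | O => vzero
  | S k => vadd (lincomb k c v) (vscal (c k) (v k))
  end.

Definition separable (X : CBanach) : Prop :=
  exists d : nat -> X, forall (x : X) (eps : R), 0 < eps -> exists k, vdist (d k) x < eps.

Definition infinite_dimensional (X : CBanach) : Prop :=
  forall (n : nat) (v : nat -> X), exists x : X, forall c : nat -> C, x <> lincomb n c v.

Definition bounded_linear {X : CBanach} (T : X -> X) : Prop :=
  (forall x y, T (vadd x y) = vadd (T x) (T y)) /\
  (forall a x, T (vscal a x) = vscal a (T x)) /\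
  (exists K : R, forall x, vnorm (T x) <= K * vnorm x).

Definition closed_subspace {X : CBanach} (M : X -> Prop) : Prop :=
  M vzero /\
  (forall x y, M x -> M y -> M (vadd x y)) /\
  (forall a x, M x -> M (vscal a x)) /\
  (forall (u : nat -> X) (l : X), (forall n, M (u n)) ->
     (forall eps, 0 < eps -> exists N, forall n, (N <= n)%nat -> vdist (u n) l < eps) ->
     M l).

Definition nontrivial_subspace {X : CBanach} (M : X -> Prop) : Prop :=
  (exists x, M x /\ x <> vzero) /\ (exists x, ~ M x).

Definition rel_open {X : CBanach} (M U : X -> Prop) : Prop :=
  (forall x, U x -> M x) /\
  (forall x, U x -> exists eps, 0 < eps /\ forall y, M y -> vdist y x < eps -> U y).

Definition nonempty {X : Type} (U : X -> Prop) : Prop := exists x, U x.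

Definition preimage_iter {X : CBanach} (T : X -> X) (n : nat) (A : X -> Prop) : X -> Prop :=
  fun x => A (Nat.iter n T x).

Definition scal_set {X : CBanach} (a : C) (U : X -> Prop) : X -> Prop :=
  fun y => exists u, U u /\ y = vscal a u.

Definition M_disk_transitive {X : CBanach} (T : X -> X) (M : X -> Prop) : Prop :=
  forall U V : X -> Prop,
    rel_open M U -> nonempty U -> rel_open M V -> nonempty V ->
    exists (n : nat) (a : C), 1 <= Cmod a /\
      exists W : X -> Prop, rel_open M W /\ nonempty W /\
        (forall x, W x -> preimage_iter T n (scal_set a U) x /\ V x).

Definition M_diskcyclic {X : CBanach} (T : X -> X) (M : X -> Prop) : Prop :=
  exists x : X,
    forall (y : X) (eps : R), M y -> 0 < eps ->
      exists (a : C) (n : nat), Cmod a <= 1 /\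
        M (vscal a (Nat.iter n T x)) /\ vdist (vscal a (Nat.iter n T x)) y < eps.

(* Since M is a closed
   subset of the complete space X, the Baire category theorem holds in M: a
   countable family of relatively open, relatively dense subsets of M has a
   common point.  Separability gives a countable family of relatively open
   balls V_k of M forming a basis of the topology of M.  For each k, the set of
   x in M having a neighbourhood W (open in M) with T^n W ⊆ a V_k for some
   n and |a| >= 1 is relatively open, and disk transitivity makes it dense
   whenever V_k is nonempty.  A common point x of all these sets is a
   diskcyclic vector: for every ball V_k meeting M, some b T^n x with
   b = 1/a lies in V_k, and |b| <= 1. *)

From Pilot Require Import Defs.
From Stdlib Require Import Reals Lra ClassicalEpsilon Classical Cantor.
Open Scope R_scope.

Section Metric.
Context {X : CBanach}.

Lemma vadd_0l (x : X) : vadd vzero x = x.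
Proof. rewrite vadd_comm; apply vadd_0. Qed.

Lemma opp_unique (a b : X) : vadd a b = vzero -> b = vopp a.
Proof.
  intro Hab.
  rewrite <- (vadd_0 _ b), <- (vadd_opp _ a), vadd_assoc, (vadd_comm _ b a), Hab.
  apply vadd_0l.
Qed.

Lemma vscal_0 (z : X) : vscal (0, 0) z = vzero.
Proof.
  set (w := vscal (0, 0) z).
  assert (Hdouble : w = vadd w w).
  { unfold w. rewrite <- vscal_distr_l. unfold Cadd; simpl. f_equal; f_equal; ring. }
  rewrite <- (vadd_opp _ w). rewrite Hdouble at 2.
  rewrite <- vadd_assoc, vadd_opp, vadd_0. reflexivity.
Qed.

Lemma vopp_scal (z : X) : vopp z = vscal (-1, 0) z.
Proof.
  symmetry. apply opp_unique.
  rewrite <- (vscal_1 _ z) at 1. rewrite <- vscal_distr_l.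
  unfold Cadd, Defs.C1; simpl. rewrite <- (vscal_0 z). f_equal; f_equal; ring.
Qed.

Lemma vnorm_opp (z : X) : vnorm (vopp z) = vnorm z.
Proof.
  rewrite vopp_scal, vnorm_scal. unfold Cmod; simpl.
  replace (-1 * -1 + 0 * 0) with 1 by ring. rewrite sqrt_1. ring.
Qed.

Lemma vnorm_zero : vnorm (@vzero X) = 0.
Proof.
  rewrite <- (vscal_0 vzero), vnorm_scal. unfold Cmod; simpl.
  replace (0 * 0 + 0 * 0) with 0 by ring. rewrite sqrt_0. ring.
Qed.

Lemma vdist_refl (x : X) : vdist x x = 0.
Proof. unfold vdist. rewrite vadd_opp. apply vnorm_zero. Qed.

Lemma vdist_sym (x y : X) : vdist x y = vdist y x.
Proof.
  unfold vdist. rewrite <- (vnorm_opp (vadd y (vopp x))). f_equal.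
  apply opp_unique.
  rewrite <- vadd_assoc, (vadd_assoc _ (vopp x) x (vopp y)).
  rewrite (vadd_comm _ (vopp x) x), vadd_opp, vadd_0l, vadd_opp.
  reflexivity.
Qed.

Lemma vdist_tri (x y z : X) : vdist x z <= vdist x y + vdist y z.
Proof.
  unfold vdist. eapply Rle_trans; [|apply vnorm_triangle]. right. f_equal.
  rewrite <- vadd_assoc, (vadd_assoc _ (vopp y) y (vopp z)).
  rewrite (vadd_comm _ (vopp y) y), vadd_opp, vadd_0l. reflexivity.
Qed.

Lemma ball_rel_open (M : X -> Prop) (c : X) (r : R) :
  rel_open M (fun v => M v /\ vdist v c < r).
Proof.
  split; [intros x [Mx _]; exact Mx|].
  intros x [Mx Dx]. exists (r - vdist x c). split; [lra|].
  intros y My Dy. split; [exact My|]. pose proof (vdist_tri y x c). lra.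
Qed.

End Metric.

Lemma pow_half_small (eps : R) : 0 < eps -> exists m, (/2) ^ m < eps.
Proof.
  intro Heps.
  destruct (pow_lt_1_zero (/2) ltac:(rewrite Rabs_pos_eq; lra) eps Heps) as [m Hm].
  exists m. specialize (Hm m (le_n m)).
  rewrite Rabs_pos_eq in Hm by (apply pow_le; lra). exact Hm.
Qed.

Lemma Cinv_in_disk (a : Defs.C) :
  1 <= Cmod a -> exists b, Cmod b <= 1 /\ Cmul b a = Defs.C1.
Proof.
  destruct a as [p q]. unfold Cmod; simpl. intro Ha.
  set (d := p * p + q * q).
  assert (Hd0 : 0 <= d) by (unfold d; nra).
  assert (Hd : 1 <= d).
  { destruct (Rle_or_lt 1 d) as [Hle|Hlt]; [exact Hle|].
    assert (sqrt d < 1) by (rewrite <- sqrt_1; apply sqrt_lt_1; lra).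
    fold d in Ha. lra. }
  exists (p / d, - q / d). split.
  - unfold Cmod; simpl. rewrite <- sqrt_1. apply sqrt_le_1_alt.
    replace (p / d * (p / d) + - q / d * (- q / d)) with (/ d)
      by (unfold d in *; field; lra).
    rewrite <- Rinv_1. apply Rinv_le_contravar; lra.
  - unfold Cmul, Defs.C1; simpl. f_equal; unfold d in *; field; lra.
Qed.

Definition converges_to {X : CBanach} (u : nat -> X) (l : X) : Prop :=
  forall eps, 0 < eps -> exists N, forall n, (N <= n)%nat -> vdist (u n) l < eps.

Definition rel_dense {X : CBanach} (M U : X -> Prop) : Prop :=
  forall y r, M y -> 0 < r -> exists z, U z /\ vdist z y < r.

(* A nested sequence of closed relative balls B_k, with B_{k+1} ⊆ G_k
   and radii halving, has a Cauchy sequence of centres whose limit works. *)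
Section RelativeBaire.
Variable X : CBanach.
Variable M : X -> Prop.
Variable G : nat -> X -> Prop.
Variable x0 : X.
Hypothesis M_x0 : M x0.
Hypothesis M_closed : forall u l, (forall n, M (u n)) -> converges_to u l -> M l.
Hypothesis G_open : forall k, rel_open M (G k).
Hypothesis G_dense : forall k, rel_dense M (G k).

Definition shrinks (k : nat) (p q : X * R) : Prop :=
  M (fst q) /\ 0 < snd q /\ vdist (fst q) (fst p) + snd q <= snd p /\
  snd q <= snd p / 2 /\ (forall y, M y -> vdist y (fst q) <= snd q -> G k y).

Lemma shrinks_exists k p : M (fst p) -> 0 < snd p -> exists q, shrinks k p q.
Proof.
  destruct p as [c r]; simpl; intros Mc Hr.
  destruct (G_dense k c (r / 2) Mc) as [z [Gz Dz]]; [lra|].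
  destruct (proj2 (G_open k) z Gz) as [s [Hs Hball]].
  pose proof (Rmin_l (s / 2) (r / 2)); pose proof (Rmin_r (s / 2) (r / 2)).
  exists (z, Rmin (s / 2) (r / 2)). unfold shrinks; simpl.
  repeat split.
  - exact (proj1 (G_open k) z Gz).
  - apply Rmin_pos; lra.
  - lra.
  - lra.
  - intros y My Dy. apply Hball; [exact My | lra].
Qed.

Fixpoint nested_balls (k : nat) : X * R :=
  match k with
  | O => (x0, 1)
  | S k => epsilon (inhabits (nested_balls k)) (shrinks k (nested_balls k))
  end.

Notation centre k := (fst (nested_balls k)).
Notation radius k := (snd (nested_balls k)).

Lemma nested_balls_spec k :
  M (centre k) /\ 0 < radius k /\ shrinks k (nested_balls k) (nested_balls (S k)).
Proof.
  assert (Hstep : forall k, M (centre k) -> 0 < radius k ->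
            shrinks k (nested_balls k) (nested_balls (S k))).
  { intros j Mj Rj. cbn [nested_balls].
    apply (epsilon_spec (inhabits _)). apply shrinks_exists; assumption. }
  induction k as [|k IH].
  - assert (Hr : 0 < radius 0) by (simpl; lra).
    split; [exact M_x0 | split; [exact Hr | apply Hstep; [exact M_x0 | exact Hr]]].
  - destruct IH as [_ [_ [Mk [Rk _]]]].
    split; [exact Mk | split; [exact Rk | apply Hstep; assumption]].
Qed.

Lemma radius_le_half_pow k : radius k <= (/2) ^ k.
Proof.
  induction k as [|k IH].
  - simpl; lra.
  - destruct (nested_balls_spec k) as [_ [_ [_ [_ [_ [Hhalf _]]]]]].
    change ((/2) ^ S k) with (/2 * (/2) ^ k). lra.
Qed.

Lemma nested_balls_nest n m :
  (n <= m)%nat -> vdist (centre m) (centre n) + radius m <= radius n.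
Proof.
  induction 1 as [|m _ IH].
  - rewrite vdist_refl. lra.
  - destruct (nested_balls_spec m) as [_ [_ [_ [_ [Hin _]]]]].
    pose proof (vdist_tri (centre (S m)) (centre m) (centre n)). lra.
Qed.

Lemma centres_cauchy : forall eps, 0 < eps -> exists N, forall m n,
    (N <= m)%nat -> (N <= n)%nat -> vnorm (vadd (centre m) (vopp (centre n))) < eps.
Proof.
  intros eps Heps. destruct (pow_half_small (eps / 2)) as [N HN]; [lra|].
  exists N. intros m n Hm Hn.
  pose proof (radius_le_half_pow N).
  pose proof (nested_balls_nest N m Hm); pose proof (nested_balls_nest N n Hn).
  pose proof (vdist_tri (centre m) (centre N) (centre n)).
  rewrite (vdist_sym (centre N) (centre n)) in *.
  pose proof (proj1 (proj2 (nested_balls_spec m))).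
  pose proof (proj1 (proj2 (nested_balls_spec n))).
  unfold vdist in *. lra.
Qed.

Lemma limit_in_balls l k : converges_to (fun n => centre n) l -> vdist l (centre k) <= radius k.
Proof.
  intro Hl.
  destruct (Rle_or_lt (vdist l (centre k)) (radius k)) as [Hle|Hgt]; [exact Hle|].
  exfalso.
  destruct (Hl (vdist l (centre k) - radius k)) as [N HN]; [lra|].
  set (n := max N k).
  pose proof (HN n (Nat.le_max_l _ _)).
  pose proof (nested_balls_nest k n (Nat.le_max_r _ _)).
  pose proof (vdist_tri l (centre n) (centre k)).
  pose proof (proj1 (proj2 (nested_balls_spec n))).
  rewrite (vdist_sym l (centre n)) in *. lra.
Qed.

Theorem relative_baire : exists x, forall k, G k x.
Proof.
  destruct (vcomplete X (fun n => centre n) centres_cauchy) as [l Hl].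
  assert (Ml : M l).
  { apply (M_closed (fun n => centre n)); [intro n; apply nested_balls_spec | exact Hl]. }
  exists l. intro k.
  destruct (nested_balls_spec k) as [_ [_ [_ [_ [_ [_ Hsub]]]]]].
  apply Hsub; [exact Ml | apply limit_in_balls; exact Hl].
Qed.

End RelativeBaire.

(* In a separable space, the relative balls M ∩ B(d_j, 2^-m), enumerated by
   k ↦ (j, m), form a countable basis of the topology of M. *)
Definition basic_ball {X : CBanach} (M : X -> Prop) (d : nat -> X) (k : nat) : X -> Prop :=
  fun v => M v /\ vdist v (d (fst (of_nat k))) < (/2) ^ (snd (of_nat k)).

Lemma basic_ball_small {X : CBanach} (M : X -> Prop) (d : nat -> X) :
  (forall (x : X) eps, 0 < eps -> exists j, vdist (d j) x < eps) ->
  forall y eps, M y -> 0 < eps ->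
    exists k, basic_ball M d k y /\ forall v, basic_ball M d k v -> vdist v y < eps.
Proof.
  intros Hd y eps My Heps.
  destruct (pow_half_small (eps / 2)) as [m Hm]; [lra|].
  destruct (Hd y ((/2) ^ m)) as [j Hj]; [apply pow_lt; lra|].
  exists (to_nat (j, m)). unfold basic_ball. rewrite cancel_of_to; simpl. split.
  - split; [exact My | rewrite vdist_sym; exact Hj].
  - intros v [_ Dv]. pose proof (vdist_tri v (d j) y). lra.
Qed.

(* x ∈ M and, if V is nonempty, some relative neighbourhood W of x is mapped
   by T^n into a V for a scalar |a| >= 1.  These are the open dense sets fed to
   the Baire theorem. *)
Definition disk_hits {X : CBanach} (T : X -> X) (M V : X -> Prop) (x : X) : Prop :=
  M x /\ (nonempty V -> exists (n : nat) (a : Defs.C) (W : X -> Prop),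
            1 <= Cmod a /\ rel_open M W /\ W x /\
            forall w, W w -> preimage_iter T n (scal_set a V) w).

Lemma disk_hits_rel_open {X : CBanach} (T : X -> X) (M V : X -> Prop) :
  rel_open M (disk_hits T M V).
Proof.
  split; [intros x [Mx _]; exact Mx|].
  intros x [Mx Hx]. destruct (classic (nonempty V)) as [HV|HV].
  - destruct (Hx HV) as [n [a [W [Ha [HW [Wx HWV]]]]]].
    destruct (proj2 HW x Wx) as [e [He Hball]].
    exists e. split; [exact He|]. intros y My Dy. split; [exact My|].
    intros _. exists n, a, W.
    split; [exact Ha | split; [exact HW | split; [exact (Hball y My Dy) | exact HWV]]].
  - exists 1. split; [lra|]. intros y My _. split; [exact My | intro; contradiction].
Qed.

Lemma disk_hits_dense {X : CBanach} (T : X -> X) (M V : X -> Prop) :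
  M_disk_transitive T M -> rel_open M V -> rel_dense M (disk_hits T M V).
Proof.
  intros Htr HVopen y r My Hr. destruct (classic (nonempty V)) as [HV|HV].
  - assert (Hball : nonempty (fun v => M v /\ vdist v y < r)).
    { exists y. split; [exact My | rewrite vdist_refl; exact Hr]. }
    destruct (Htr V _ HVopen HV (ball_rel_open M y r) Hball)
      as [n [a [Ha [W [HW [[w Ww] HWV]]]]]].
    destruct (HWV w Ww) as [_ [Mw Dw]].
    exists w. split; [|exact Dw]. split; [exact Mw|].
    intros _. exists n, a, W.
    split; [exact Ha | split; [exact HW | split; [exact Ww |]]].
    intros w' Ww'. exact (proj1 (HWV w' Ww')).
  - exists y. split; [split; [exact My | intro; contradiction] | rewrite vdist_refl; exact Hr].
Qed.

Lemma disk_hits_orbit {X : CBanach} (T : X -> X) (M V : X -> Prop) (x : X) :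
  disk_hits T M V x -> nonempty V ->
  exists (b : Defs.C) (n : nat), Cmod b <= 1 /\ V (vscal b (Nat.iter n T x)).
Proof.
  intros [_ Hx] HV. destruct (Hx HV) as [n [a [W [Ha [_ [Wx HWV]]]]]].
  destruct (HWV x Wx) as [u [Vu Hu]].
  destruct (Cinv_in_disk a Ha) as [b [Hb Hba]].
  exists b, n. split; [exact Hb|].
  replace (vscal b (Nat.iter n T x)) with u; [exact Vu|].
  rewrite Hu, vscal_assoc, Hba. symmetry. apply vscal_1.
Qed.

Theorem mainTheorem5 (X : CBanach) (T : X -> X) (M : X -> Prop) :
  separable X -> infinite_dimensional X -> bounded_linear T ->
  closed_subspace M -> nontrivial_subspace M ->
  M_disk_transitive T M -> M_diskcyclic T M.
Proof.
  intros [d Hd] _ _ [M0 [_ [_ Mclosed]]] _ Htr.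
  set (V := basic_ball M d).
  destruct (relative_baire X M (fun k => disk_hits T M (V k)) vzero M0 Mclosed)
    as [x Hx].
  - intro k. apply disk_hits_rel_open.
  - intro k. apply disk_hits_dense; [exact Htr | apply ball_rel_open].
  - exists x. intros y eps My Heps.
    destruct (basic_ball_small M d Hd y eps My Heps) as [k [Vy Vsmall]].
    destruct (disk_hits_orbit T M (V k) x (Hx k) (ex_intro _ y Vy)) as [b [n [Hb Vb]]].
    exists b, n. split; [exact Hb|].
    split; [exact (proj1 Vb) | exact (Vsmall _ Vb)].
Qed.
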